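(* Let $\varphi$ be a primitive $k$-uniform morphism on $\{0,1\}$ and let $w$ be an infinite fixed point of $\varphi$. The following are equivalent: 1. $w$ is bounded weak abelian periodic; 2. $w$ is abelian periodic; 3. $\varphi(0)\sim_{ab}\varphi(1)$, or $k$ is odd and $\varphi(0)=(01)^{\frac{k-1}{2}}0$, $\varphi(1)=(10)^{\frac{k-1}{2}}1$.
   Context: A morphism $\varphi$ on $\{0,1\}^*$ is $k$-uniform if $|\varphi(0)|=|\varphi(1)|=k$, and primitive if for some $m$ both $\varphi^m(0)$ and $\varphi^m(1)$ contain both letters. $|u|_a$ is the number of occurrences of letter $a$ in $u$; $u\sim_{ab}v$ (abelian equivalent) means $|u|_a=|v|_a$ for every letter $a$. For nonempty finite $u$, $\rho_a(u)=|u|_a/|u|$. An infinite word $w$ is abelian (ultimately) periodic if $w=v_0v_1v_2\cdots$ with finite words $v_i$ such that $v_i\sim_{ab}v_j$ for all $i,j\ge1$. It is weak abelian periodic if $w=v_0v_1v_2\cdots$ with $v_0$ finite and $v_1,v_2,\dots$ nonempty finite words with $\rho_a(v_i)=\rho_a(v_j)$ for all letters $a$ and all $i,j\ge1$, and bounded weak abelian periodic if such a factorization exists with $|v_i|\le C$ for all $i$ for some constant $C$. *)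

(* Alphabet {0,1} is encoded as bool: 0 = false, 1 = true. *)
From mathcomp Require Import all_boot all_order all_algebra.
Set Implicit Arguments. Unset Strict Implicit. Unset Printing Implicit Defensive.
Import GRing.Theory Num.Theory.

Definition morph := bool -> seq bool.

Definition morph_word (phi : morph) (u : seq bool) : seq bool := flatten (map phi u).
Definition morph_iter (phi : morph) (m : nat) (u : seq bool) : seq bool :=
  iter m (morph_word phi) u.

Definition uniform (phi : morph) (k : nat) : Prop :=
  size (phi false) = k /\ size (phi true) = k.

Definition primitive (phi : morph) : Prop :=
  exists m, forall a b : bool, b \in morph_iter phi m [:: a].

Definition iword := nat -> bool.
Definition prefix (w : iword) (n : nat) : seq bool := mkseq w n.

(* w is a fixed point of phi: phi(w) = w, i.e. for every n the image of the
   length-n prefix of w is a prefix of w. *)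
Definition fixed_point (phi : morph) (w : iword) : Prop :=
  forall n i, i < size (morph_word phi (prefix w n)) ->
    nth false (morph_word phi (prefix w n)) i = w i.

Definition factor (w : iword) (i j : nat) : seq bool := mkseq (fun t => w (i + t)) (j - i).

Definition abelian_eq (u v : seq bool) : Prop :=
  forall a : bool, count_mem a u = count_mem a v.

Definition rho (a : bool) (u : seq bool) : rat := (count_mem a u)%:R / (size u)%:R.

(* A factorization w = v_0 v_1 v_2 ... is encoded by cut points c : nat -> nat
   with v_0 = w[0, c 0) and v_(i+1) = w[c i, c (i+1)). The cuts must be
   nondecreasing and unbounded so that the concatenation is all of w. *)
Definition block (w : iword) (c : nat -> nat) (i : nat) : seq bool := factor w (c i) (c i.+1).

Definition abelian_periodic (w : iword) : Prop :=
  exists c : nat -> nat,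
    (forall i, c i <= c i.+1) /\ (forall N, exists i, N <= c i) /\
    (forall i j, abelian_eq (block w c i) (block w c j)).

(* Nonempty blocks: c strictly increasing (hence unbounded). *)
Definition weak_abelian_periodic_fact (w : iword) (c : nat -> nat) : Prop :=
  (forall i, c i < c i.+1) /\
  (forall i j (a : bool), rho a (block w c i) = rho a (block w c j)).

Definition weak_abelian_periodic (w : iword) : Prop :=
  exists c, weak_abelian_periodic_fact w c.

Definition bounded_weak_abelian_periodic (w : iword) : Prop :=
  exists c, weak_abelian_periodic_fact w c /\
    exists C, forall i, size (block w c i) <= C.

Definition alt01 (n : nat) : seq bool := flatten (nseq n [:: false; true]) ++ [:: false].
Definition alt10 (n : nat) : seq bool := flatten (nseq n [:: true; false]) ++ [:: true].

(* (3) implies (2): if phi(0) and phi(1) are abelian equivalent, the images phi(w_i)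
   factor w into abelian equivalent blocks; in the exceptional case w is (01)^omega or
   (10)^omega.  (2) implies (1) trivially.  For (1) implies (3), equal frequencies of the
   blocks force the frequency of 1 in w to be a rational p/q with bounded discrepancy
   D(n) = q |w[0,n)|_1 - p n.  Since w = phi(w),
     D(kn + r) = lambda D(n) + K n + (discrepancy of the length-r prefix of phi(w_n)),
   where lambda = |phi(1)|_1 - |phi(0)|_1 is [second_eigenvalue] and K is [drift].
   Boundedness forces K = 0, and as primitivity makes D(1) nonzero, D(k^m) = lambda^m D(1)
   forces |lambda| <= 1.  If lambda = 0 then phi(0) ~ phi(1).  If lambda = +-1 and phi(y)
   had equal letters z at positions r and r+1, then going around a loop y -> z -> y of the
   fixed point would shift D by a constant along infinitely many positions, both through r
   and through r+1; both constants vanish, which gives q z = p, impossible since both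
   letters have unbounded counts.  So phi(0) and phi(1) are alternating words, and the
   first letter of w pins down which ones. *)

From Pilot Require Import Defs.
From mathcomp Require Import all_boot all_order all_algebra zify ring.

Set Implicit Arguments. Unset Strict Implicit. Unset Printing Implicit Defensive.
Import Order.TTheory GRing.Theory Num.Theory.

Local Notation prefix := Defs.prefix.

Lemma count_bool_split (b : bool) u : count_mem b u + count_mem (~~ b) u = size u.
Proof. by elim: u => [|a u IHu] //=; rewrite -IHu; case: a; case: (b) => /=; lia. Qed.

Section Morphism.
Variable phi : morph.

Lemma morph_word_cat u v :
  morph_word phi (u ++ v) = morph_word phi u ++ morph_word phi v.
Proof. by rewrite /morph_word map_cat flatten_cat. Qed.

Lemma count_morph_word b u :
  count_mem b (morph_word phi u) =
  count_mem b (phi true) * count_mem true u + count_mem b (phi false) * count_mem false u.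
Proof.
elim: u => [|a u IHu] /=; first by rewrite !muln0.
by rewrite -cat1s morph_word_cat count_cat IHu /morph_word /= cats0; case: a => /=; lia.
Qed.

Lemma count_morph_word_ge b u :
  count_mem b (phi (~~ b)) * count_mem (~~ b) u <= count_mem b (morph_word phi u).
Proof. by rewrite count_morph_word; case: b; [apply: leq_addl | apply: leq_addr]. Qed.

Lemma primitive_image_other : primitive phi -> forall a, ~~ a \in phi a.
Proof.
move=> [m prim_m] a; apply: contraT => phi_a.
have phi_a_const : all (pred1 a) (phi a) by apply/allP; case: a phi_a => /negP + [].
have all_a u : all (pred1 a) u -> all (pred1 a) (morph_word phi u).
  elim: u => [|b u IHu] //= /andP[/eqP-> /IHu].
  by rewrite -cat1s morph_word_cat all_cat /morph_word /= cats0 phi_a_const => ->.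
have := prim_m a (~~ a).
suff /allP/[apply] : all (pred1 a) (morph_iter phi m [:: a]) by case: (a).
by elim: m {prim_m} => [|m IHm]; rewrite /= ?eqxx // all_a.
Qed.

Variable k : nat.
Hypothesis phi_unif : uniform phi k.

Lemma size_phi a : size (phi a) = k.
Proof. by case: phi_unif; case: a. Qed.

Lemma size_morph_word u : size (morph_word phi u) = k * size u.
Proof.
elim: u => [|a u IHu]; first by rewrite muln0.
by rewrite -cat1s morph_word_cat size_cat IHu /morph_word /= cats0 size_phi mulnS.
Qed.

Lemma uniform_primitive_gt1 : primitive phi -> 1 < k.
Proof.
case=> m prim_m.
have two_letters : 1 < size (morph_iter phi m [:: false]).
  move: (prim_m false false) (prim_m false true).
  by case: (morph_iter _ _ _) => [|x [|y s]] //; rewrite !inE => /eqP <-.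
have size_iter j : size (morph_iter phi j [:: false]) = k ^ j.
  by elim: j => // j IHj; rewrite /morph_iter iterS size_morph_word IHj expnS.
move: two_letters; rewrite size_iter.
by case: (k) => [|[|k']] //; rewrite ?exp1n //; case: (m) => // j; rewrite exp0n.
Qed.
End Morphism.

Lemma prefix_addn (w : iword) m n : prefix w (m + n) = prefix w m ++ factor w m (m + n).
Proof.
rewrite /prefix /factor /mkseq iotaD map_cat addKn; congr (_ ++ _).
by rewrite add0n -[m in iota m](addn0 m) iotaDl -map_comp.
Qed.

Lemma take_prefix (w : iword) m n : m <= n -> take m (prefix w n) = prefix w m.
Proof. by move=> le_mn; rewrite /prefix /mkseq -map_take take_iota (minn_idPl le_mn). Qed.

Lemma nth_prefix (w : iword) n i : i < n -> nth false (prefix w n) i = w i.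
Proof. exact: nth_mkseq. Qed.

Section FixedPoint.
Variables (phi : morph) (k : nat) (w : iword).
Hypotheses (phi_unif : uniform phi k) (w_fix : fixed_point phi w).

Lemma morph_word_prefix n : morph_word phi (prefix w n) = prefix w (k * n).
Proof.
apply: (@eq_from_nth _ false) => [|i]; rewrite (size_morph_word phi_unif) // !size_mkseq //.
by move=> lt_i; rewrite w_fix ?nth_prefix // (size_morph_word phi_unif) // size_mkseq.
Qed.

Lemma prefix_mulnS n : prefix w (k * n.+1) = prefix w (k * n) ++ phi (w n).
Proof.
by rewrite -!morph_word_prefix /prefix mkseqS -cats1 morph_word_cat /morph_word /= cats0.
Qed.

Lemma prefix_mulnD n r : r <= k ->
  prefix w (k * n + r) = prefix w (k * n) ++ take r (phi (w n)).
Proof.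
move=> le_rk; have le_kn : k * n + r <= k * n.+1 by rewrite mulnS addnC leq_add2r.
by rewrite -(take_prefix w le_kn) prefix_mulnS take_cat size_mkseq ltnNge leq_addr /= addKn.
Qed.

Lemma fixed_point_nth n r : r < k -> w (k * n + r) = nth false (phi (w n)) r.
Proof.
move=> lt_rk; rewrite -(@nth_prefix w (k * n.+1)); last by rewrite mulnS addnC ltn_add2r.
by rewrite prefix_mulnS nth_cat size_mkseq ltnNge leq_addr /= addKn.
Qed.

Lemma block_muln i : block w (muln k) i = phi (w i).
Proof.
have len_block : k * i.+1 - k * i = k by rewrite mulnS addnK.
apply: (@eq_from_nth _ false) => [|t]; rewrite size_mkseq len_block ?(size_phi phi_unif) //.
move=> lt_t.
by rewrite nth_mkseq ?len_block // fixed_point_nth.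
Qed.

End FixedPoint.

Section PrimitiveFixedPoint.
Variables (phi : morph) (k : nat) (w : iword).
Hypotheses (phi_unif : uniform phi k) (phi_prim : primitive phi) (w_fix : fixed_point phi w).

Lemma count_prefix_unbounded b N : exists n, N < count_mem b (prefix w n).
Proof.
have other_gt0 : 0 < count_mem b (phi (~~ b)).
  by rewrite -has_count has_pred1 -[b in b \in _]negbK primitive_image_other.
(* Either b or ~~ b occurs more than N times in w[0, 2N+1); each ~~ b yields a b in phi. *)
case: (ltnP N (count_mem b (prefix w N.*2.+1))) => [|le_bN]; first by exists N.*2.+1.
exists (k * N.*2.+1); rewrite -(morph_word_prefix phi_unif w_fix).
apply: (leq_trans _ (count_morph_word_ge _ b _)).
have := count_bool_split b (prefix w N.*2.+1); rewrite size_mkseq.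
have := leq_pmull (count_mem (~~ b) (prefix w N.*2.+1)) other_gt0; lia.
Qed.

Lemma letter_occurs b : exists n, w n = b.
Proof.
have [n] := count_prefix_unbounded b 0.
by rewrite -has_count has_pred1 => /mapP[i _ ->]; exists i.
Qed.

End PrimitiveFixedPoint.

Definition alternating (b : bool) (n : nat) : seq bool := mkseq (fun i => b (+) odd i) n.

Lemma alternating_cons b n : alternating b n.+1 = b :: alternating (~~ b) n.
Proof.
apply: (@eq_from_nth _ false) => [|i]; first by rewrite /alternating size_mkseq /= size_mkseq.
rewrite size_mkseq; case: i => [|i] lt_i; first by rewrite nth_mkseq // addbF.
by rewrite nth_mkseq //= nth_mkseq // addbN addNb.
Qed.

Lemma alternating_odd b n : alternating b n.*2.+1 = flatten (nseq n [:: b; ~~ b]) ++ [:: b].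
Proof.
elim: n => [|n IHn]; first by rewrite /alternating /mkseq /= addbF.
by rewrite doubleS 2!alternating_cons negbK IHn.
Qed.

Lemma alt01_alternating n : alt01 n = alternating false n.*2.+1.
Proof. by rewrite alternating_odd. Qed.

Lemma alt10_alternating n : alt10 n = alternating true n.*2.+1.
Proof. by rewrite alternating_odd. Qed.

Lemma count_alternating_even b c n : count_mem c (alternating b n.*2) = n.
Proof.
elim: n => [|n IHn] //; rewrite doubleS 2!alternating_cons negbK /= IHn.
by case: (b); case: (c).
Qed.

Lemma alternating_of_adjacent_neq (s : seq bool) :
  (forall r, r.+1 < size s -> nth false s r.+1 != nth false s r) ->
  s = alternating (nth false s 0) (size s).
Proof.
move=> adj_neq; apply: (@eq_from_nth _ false); rewrite ?size_mkseq // => i lt_i.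
rewrite nth_mkseq //; elim: i lt_i => [|i IHi] lt_i; first by rewrite addbF.
rewrite /= addbN -(IHi (ltnW lt_i)).
by move: (adj_neq i lt_i); case: (nth false s i.+1); case: (nth false s i).
Qed.

Definition abelian_periodic_morph (phi : morph) (k : nat) : Prop :=
  abelian_eq (phi false) (phi true) \/
  (odd k /\ phi false = alt01 (k.-1./2) /\ phi true = alt10 (k.-1./2)).

Lemma alternating_images_abelian_periodic_morph phi k x : uniform phi k ->
  (forall a r, r.+1 < k -> nth false (phi a) r.+1 != nth false (phi a) r) ->
  nth false (phi x) 0 = x ->
  abelian_periodic_morph phi k.
Proof.
move=> phi_unif adj_neq phi_x.
have phi_alt a : phi a = alternating (nth false (phi a) 0) k.
  rewrite -(size_phi phi_unif a) -alternating_of_adjacent_neq // => r.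
  by rewrite (size_phi phi_unif); apply: adj_neq.
have [eq_heads|neq_heads] := eqVneq (nth false (phi false) 0) (nth false (phi true) 0).
  by left; rewrite phi_alt [phi true]phi_alt eq_heads.
have phi_alt_id a : phi a = alternating a k.
  rewrite phi_alt; congr alternating.
  move: neq_heads; case: x phi_x => phi_x; rewrite phi_x; case: a => //.
    by case: (nth false (phi false) 0).
  by case: (nth false (phi true) 0).
have [odd_k|even_k] := boolP (odd k).
  right; rewrite alt01_alternating alt10_alternating !phi_alt_id.
  by have <- : k = (k.-1./2).*2.+1 by lia.
left; rewrite !phi_alt_id (_ : k = k./2.*2); last by lia.
by move=> c; rewrite !count_alternating_even.
Qed.

Lemma alternating_fixed_point phi k w : uniform phi k -> primitive phi -> fixed_point phi w ->
  odd k -> (forall a, phi a = alternating a k) -> forall i, w i = w 0 (+) odd i.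
Proof.
move=> phi_unif phi_prim w_fix odd_k phi_alt.
have k_gt1 := uniform_primitive_gt1 phi_unif phi_prim.
elim/ltn_ind => i IHi; have [->|i_gt0] := posnP i; first by rewrite addbF.
have lt_mod : (i %% k < k) by rewrite ltn_mod ltnW.
rewrite (divn_eq i k) mulnC (fixed_point_nth phi_unif w_fix _ lt_mod) phi_alt nth_mkseq //.
by rewrite (IHi (i %/ k)) ?ltn_Pdiv // oddD oddM odd_k addbA.
Qed.

Lemma abelian_periodic_morph_fixed_point phi k w :
  uniform phi k -> primitive phi -> fixed_point phi w ->
  abelian_periodic_morph phi k -> abelian_periodic w.
Proof.
move=> phi_unif phi_prim w_fix.
have k_gt1 := uniform_primitive_gt1 phi_unif phi_prim.
case=> [phi_ab|[odd_k [phi0 phi1]]].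
  exists (muln k); split; [|split].
  - by move=> i; rewrite leq_mul2l leqnSn orbT.
  - by move=> N; exists N; apply: leq_pmull; apply: ltnW.
  - move=> i j; rewrite !(block_muln phi_unif w_fix).
    by case: (w i); case: (w j) => // a; rewrite phi_ab.
have phi_alt a : phi a = alternating a k.
  have k_odd : k = (k.-1./2).*2.+1 by lia.
  by case: a; rewrite ?phi0 ?phi1 ?alt01_alternating ?alt10_alternating -k_odd.
have w_alt := alternating_fixed_point phi_unif phi_prim w_fix odd_k phi_alt.
have block2 i : block w (muln 2) i = [:: w 0; ~~ w 0].
  rewrite /block /factor (_ : 2 * i.+1 - 2 * i = 2); last by lia.
  rewrite /mkseq /= (w_alt (2 * i + 0)) (w_alt (2 * i + 1)) !oddD /=.
  by case: (w 0); case: (odd i).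
exists (muln 2); split; [|split] => [i|N|i j a]; last by rewrite !block2.
- by rewrite leq_mul2l leqnSn.
- by exists N; rewrite leq_pmull.
Qed.

Lemma abelian_periodic_bounded_weak w :
  abelian_periodic w -> bounded_weak_abelian_periodic w.
Proof.
move=> [c [c_mono [c_unbounded block_ab]]].
have size_block i : size (block w c i) = size (block w c 0).
  by rewrite -!(count_bool_split true) !(block_ab i 0).
have len_block i : (c i.+1 - c i) = size (block w c 0) by rewrite -(size_block i) size_mkseq.
have block_gt0 : (0 < size (block w c 0)).
  rewrite lt0n; apply/eqP => block0; have c_const i : c i = c 0.
    by elim: i => // i IHi; have := len_block i; have := c_mono i; lia.
  by have [i] := c_unbounded (c 0).+1; rewrite c_const ltnn.
exists c; split; last by exists (size (block w c 0)) => i; rewrite size_block.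
split=> [i|i j a]; first by have := len_block i; have := c_mono i; lia.
by rewrite /rho !size_block (block_ab i j a).
Qed.

Local Open Scope ring_scope.

(* [discr p q u] vanishes iff the letter 1 has frequency exactly p/q in u. *)
Definition discr (p q : nat) (u : seq bool) : int :=
  (q * count_mem true u)%:Z - (p * size u)%:Z.

Lemma discr_cat p q u v : discr p q (u ++ v) = discr p q u + discr p q v.
Proof. rewrite /discr count_cat size_cat; lia. Qed.

Lemma discr_letter p q (a : bool) : discr p q [:: a] = (q * a)%:Z - p%:Z.
Proof. by rewrite /discr /= addn0 muln1; case: a. Qed.

Lemma norm_discr_le p q u : `|discr p q u| <= ((p + q) * size u)%:Z.
Proof.
have le_count : (count_mem true u <= size u)%N := count_size _ _.
by have := leq_mul (leqnn q) le_count; rewrite /discr mulnDl; lia.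
Qed.

(* The incidence matrix of a k-uniform morphism has the eigenvalues k and this one. *)
Definition second_eigenvalue (phi : morph) : int :=
  (count_mem true (phi true))%:Z - (count_mem true (phi false))%:Z.

Definition drift (phi : morph) (k p q : nat) : int :=
  (q * count_mem true (phi false))%:Z + second_eigenvalue phi * p%:Z - (p * k)%:Z.

Lemma discr_morph_word phi k p q u : uniform phi k ->
  discr p q (morph_word phi u) =
  second_eigenvalue phi * discr p q u + drift phi k p q * (size u)%:Z.
Proof.
move=> phi_unif; rewrite /discr /drift /second_eigenvalue count_morph_word.
by rewrite (size_morph_word phi_unif) -(count_bool_split true u) !(PoszD, PoszM); ring.
Qed.

Lemma second_eigenvalue_eq0 phi k : uniform phi k ->
  second_eigenvalue phi = 0 -> abelian_eq (phi false) (phi true).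
Proof.
move=> phi_unif /eqP; rewrite subr_eq0 => /eqP[eq_ones] [] /=; first by rewrite eq_ones.
have := count_bool_split true (phi false); have := count_bool_split true (phi true).
by rewrite /= eq_ones !(size_phi phi_unif) => <- /addnI.
Qed.

Lemma int_mul_bounded_eq0 (K L : int) : (forall n : nat, `|K * n%:Z| <= L) -> K = 0.
Proof.
by move=> K_bounded; apply/eqP; apply: contraT => K_neq0; have := K_bounded (absz L).+1; nia.
Qed.

Lemma bounded_shift_eq0 (E : nat -> int) (L g : int) (P : nat -> Prop) (f : nat -> nat) n0 :
  (forall n, `|E n| <= L) -> P n0 -> (forall n, P n -> P (f n) /\ E (f n) = E n + g) -> g = 0.
Proof.
move=> E_bounded P_n0 f_shift.
have iter_shift j : P (iter j f n0) /\ E (iter j f n0) = E n0 + j%:Z * g.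
  elim: j => [|j [Pj Ej]]; first by rewrite mul0r addr0.
  by have [Pf ->] := f_shift _ Pj; split => //; rewrite Ej -addn1 PoszD; ring.
apply/eqP; apply: contraT => g_neq0.
have [_ Ej] := iter_shift (absz L + absz (E n0)).+1%N.
have := E_bounded (iter (absz L + absz (E n0)).+1 f n0); have := E_bounded n0.
rewrite Ej; set j := (_.+1)%N; have : `|j%:Z * g| = j%:Z * `|g| by rewrite normrM.
nia.
Qed.

Section BoundedDiscrepancy.
Variables (phi : morph) (k : nat) (w : iword) (p q : nat) (B : int).
Hypotheses (phi_unif : uniform phi k) (phi_prim : primitive phi) (w_fix : fixed_point phi w).
Hypotheses (q_gt0 : (0 < q)%N) (discr_bounded : forall n, `|discr p q (prefix w n)| <= B).

Local Notation D n := (discr p q (prefix w n)).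
Local Notation lambda := (second_eigenvalue phi).

Lemma discr_prefix_mulnD n r : (r <= k)%N ->
  D (k * n + r) = lambda * D n + drift phi k p q * n%:Z + discr p q (take r (phi (w n))).
Proof.
move=> le_rk; rewrite (prefix_mulnD phi_unif w_fix) // discr_cat.
by rewrite -(morph_word_prefix phi_unif w_fix) (discr_morph_word _ _ _ phi_unif) size_mkseq.
Qed.

Lemma discr_prefix_muln_drift n : D (k * n) = lambda * D n + drift phi k p q * n%:Z.
Proof.
have := discr_prefix_mulnD n (leq0n k).
by rewrite addn0 take0 [discr _ _ [::]]/discr /= !muln0 subrr addr0.
Qed.

Lemma drift_eq0 : drift phi k p q = 0.
Proof.
apply: (@int_mul_bounded_eq0 _ (B + `|lambda| * B)) => n.
have := discr_bounded (k * n); have := discr_bounded n; rewrite discr_prefix_muln_drift.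
have := normr_ge0 lambda; have := normrM lambda (D n); nia.
Qed.

Lemma discr_prefix_muln n : D (k * n) = lambda * D n.
Proof. by rewrite discr_prefix_muln_drift drift_eq0 mul0r addr0. Qed.

Lemma discr_letter_neq0 a : discr p q [:: a] != 0.
Proof.
apply/negP => /eqP; rewrite discr_letter => discr_a.
have [n] := count_prefix_unbounded phi_unif phi_prim w_fix (~~ a) (absz B).
have := discr_bounded n; rewrite /discr -(count_bool_split a (prefix w n)) mulnDr.
have := leq_pmull (count_mem (~~ a) (prefix w n)) q_gt0.
by move: discr_a; case: a => /=; lia.
Qed.

Lemma second_eigenvalue_le1 : `|lambda| <= 1.
Proof.
rewrite leNgt; apply/negP => lambda_gt1.
have D1_neq0 : D 1 != 0 by apply: discr_letter_neq0.
have grow m : (2 ^ m)%:Z <= `|D (k ^ m)|.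
  elim: m => [|m IHm]; first by rewrite !expn0; move: D1_neq0; lia.
  rewrite !expnS discr_prefix_muln normrM PoszM.
  by apply: ler_pM => //; lia.
have := grow (absz B); have := discr_bounded (k ^ absz B).
have := ltn_expl (absz B) (isT : 1 < 2)%N; lia.
Qed.

Lemma discr_loop_eq0 y z r s : lambda * lambda = 1 -> (r < k)%N -> (s < k)%N ->
  nth false (phi y) r = z -> nth false (phi z) s = y ->
  lambda * discr p q (take r (phi y)) + discr p q (take s (phi z)) = 0.
Proof.
move=> lambda2 lt_rk lt_sk phi_y_r phi_z_s.
have [n0 w_n0] := letter_occurs phi_unif phi_prim w_fix y.
apply: (@bounded_shift_eq0 (fun n => D n) B _ (fun n => w n = y)
          (fun n => k * (k * n + r) + s)%N n0) => // n w_n.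
have w_kn_r : w (k * n + r)%N = z by rewrite (fixed_point_nth phi_unif w_fix) // w_n.
split; first by rewrite (fixed_point_nth phi_unif w_fix) // w_kn_r.
rewrite (discr_prefix_mulnD _ (ltnW lt_sk)) w_kn_r (discr_prefix_mulnD _ (ltnW lt_rk)) w_n.
by rewrite drift_eq0 !mul0r !addr0 mulrDr mulrA lambda2; ring.
Qed.

Lemma phi_adjacent_neq : lambda * lambda = 1 ->
  forall y r, (r.+1 < k)%N -> nth false (phi y) r.+1 != nth false (phi y) r.
Proof.
move=> lambda2 y r lt_r1k; move phi_y_r: (nth false (phi y) r) => z; apply/eqP => phi_y_r1.
have [s lt_sk phi_z_s] : exists2 s, (s < k)%N & nth false (phi z) s = y.
  have [eq_zy|z_neq_y] := eqVneq z y; first by exists r; [apply: ltnW | rewrite eq_zy phi_y_r].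
  have y_in : y \in phi z.
    by have := primitive_image_other phi_prim z; case: (y) (z) z_neq_y => -[].
  by exists (index y (phi z)); rewrite ?nth_index // -(size_phi phi_unif z) index_mem.
have loop_r := discr_loop_eq0 lambda2 (ltnW lt_r1k) lt_sk phi_y_r phi_z_s.
have loop_r1 := discr_loop_eq0 lambda2 lt_r1k lt_sk phi_y_r1 phi_z_s.
have take_r1 : take r.+1 (phi y) = rcons (take r (phi y)) z.
  by rewrite (take_nth false) ?phi_y_r // (size_phi phi_unif) ltnW.
have lambda_z : lambda * discr p q [:: z] = 0.
  by move: loop_r1; rewrite take_r1 -cats1 discr_cat mulrDr -addrAC loop_r add0r.
have /eqP := discr_letter_neq0 z; apply.
by rewrite -[discr _ _ _]mul1r -lambda2 -mulrA lambda_z mulr0.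
Qed.

Lemma bounded_discr_abelian_periodic_morph : abelian_periodic_morph phi k.
Proof.
have k_gt0 : (0 < k)%N := ltnW (uniform_primitive_gt1 phi_unif phi_prim).
have [lambda0|lambda2] : lambda = 0 \/ lambda * lambda = 1.
  by have := second_eigenvalue_le1; rewrite ler_norml; nia.
- by left; apply: second_eigenvalue_eq0 phi_unif lambda0.
- have phi_w0 : nth false (phi (w 0%N)) 0 = w 0%N.
    by have := fixed_point_nth phi_unif w_fix 0 k_gt0; rewrite muln0.
  exact: alternating_images_abelian_periodic_morph phi_unif (phi_adjacent_neq lambda2) phi_w0.
Qed.

End BoundedDiscrepancy.

Lemma cut_segment (c : nat -> nat) n : (forall i, c i < c i.+1)%N -> (c 0 <= n)%N ->
  exists i, (c i <= n < c i.+1)%N.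
Proof.
move=> c_incr; elim: n => [|n IHn] le_c0n.
  by exists 0%N; rewrite le_c0n (leq_trans _ (c_incr 0%N)).
have [lt_n_c0|le_c0_n] := ltnP n (c 0%N).
  by exists 0%N; have := c_incr 0%N; lia.
have [i /andP[le_ci lt_ci1]] := IHn le_c0_n.
have [lt_n1|le_ci1] := ltnP n.+1 (c i.+1); first by exists i; rewrite lt_n1 andbT leqW.
by exists i.+1; have := c_incr i.+1; lia.
Qed.

Lemma bounded_weak_abelian_periodic_discr w : bounded_weak_abelian_periodic w ->
  exists p q B, (0 < q)%N /\ forall n, `|discr p q (prefix w n)| <= B.
Proof.
move=> [c [[c_incr rho_eq] [C block_le]]].
pose p := count_mem true (block w c 0); pose q := size (block w c 0).
have size_block i : size (block w c i) = (c i.+1 - c i)%N by rewrite size_mkseq.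
have size_block_gt0 i : (0 < size (block w c i))%N by rewrite size_block subn_gt0.
have discr_block i : discr p q (block w c i) = 0.
  move: (rho_eq i 0%N true); rewrite /rho => /eqP.
  rewrite eqr_div ?pnatr_eq0 -?lt0n // -!natrM eqr_nat => /eqP eq_freq.
  by rewrite /discr mulnC eq_freq mulnC subrr.
have discr_cut i : discr p q (prefix w (c i)) = discr p q (prefix w (c 0%N)).
  elim: i => [|i IHi] //; have := prefix_addn w (c i) (c i.+1 - c i).
  by rewrite subnKC ?(ltnW (c_incr i)) // => ->; rewrite discr_cat IHi discr_block addr0.
exists p, q, ((p + q) * (c 0%N + C))%N%:Z; split=> [|n]; first exact: size_block_gt0.
have le_pq m m' : (m <= m')%N -> ((p + q) * m)%N%:Z <= ((p + q) * m')%N%:Z.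
  by move=> le_m; rewrite lez_nat leq_mul2l le_m orbT.
have [lt_n_c0|le_c0_n] := ltnP n (c 0%N).
  by apply: le_trans (norm_discr_le _ _ _) _; rewrite size_mkseq le_pq //; lia.
have [i /andP[le_ci_n lt_n_ci1]] := cut_segment c_incr le_c0_n.
rewrite -(subnKC le_ci_n) prefix_addn discr_cat discr_cut.
apply: le_trans (ler_normD _ _) _; rewrite mulnDr PoszD lerD //.
  by apply: le_trans (norm_discr_le _ _ _) _; rewrite size_mkseq.
apply: le_trans (norm_discr_le _ _ _) _; rewrite size_mkseq addKn le_pq //.
by apply: leq_trans (block_le i); rewrite size_block leq_sub2r // ltnW.
Qed.

Theorem theorem2 (phi : morph) (k : nat) (w : iword) :
  uniform phi k -> primitive phi -> fixed_point phi w ->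
  [/\ (bounded_weak_abelian_periodic w <-> abelian_periodic w)
    & (abelian_periodic w <->
       (abelian_eq (phi false) (phi true) \/
        (odd k /\ phi false = alt01 (k.-1./2) /\ phi true = alt10 (k.-1./2))))].
Proof.
move=> phi_unif phi_prim w_fix.
have morph_of_bwap : bounded_weak_abelian_periodic w -> abelian_periodic_morph phi k.
  case/bounded_weak_abelian_periodic_discr => p [q [B [q_gt0 discr_bounded]]].
  exact: bounded_discr_abelian_periodic_morph phi_unif phi_prim w_fix q_gt0 discr_bounded.
have ap_of_morph := abelian_periodic_morph_fixed_point phi_unif phi_prim w_fix.
split; split.
- by move/morph_of_bwap/ap_of_morph.
- exact: abelian_periodic_bounded_weak.
- by move/abelian_periodic_bounded_weak/morph_of_bwap.
- exact: ap_of_morph.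
Qed.
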